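(* Let $G=\mathrm{Aut}(\mathbf{K})$ for a Fraïssé structure $\mathbf{K}$ with exhaustion $\bigcup_n\mathbf{A}_n$, and let $Y\subseteq S(G)$ be a subflow. If $T\in\mathcal{F}^Y_m$ and $f\in\mathrm{Emb}(\mathbf{A}_m,\mathbf{A}_n)$, then $f(T)\in\mathcal{F}^Y_n$.
   Context: $\mathbf{K}$ is a countably infinite ultrahomogeneous relational structure, $\mathbf{A}_1\subseteq\mathbf{A}_2\subseteq\cdots$ finite substructures with $|\mathbf{A}_n|=n$ and union $\mathbf{K}$; $G$ has the pointwise convergence topology; $H_n=\mathrm{Emb}(\mathbf{A}_n,\mathbf{K})$; $i^n_m$ is the inclusion $\mathbf{A}_m\to\mathbf{A}_n$. For $f\in\mathrm{Emb}(\mathbf{A}_m,\mathbf{A}_n)$ and $T\subseteq H_m$, $f(T)=\{s\in H_n:s\circ f\in T\}$. $S(G)$ is the inverse limit of the spaces $\beta H_n$ of ultrafilters on $H_n$ along the continuous extensions of $x\mapsto x\circ i^n_m$; write $\alpha(n)$ for the $n$-th coordinate of $\alpha\in S(G)$. The right $G$-action: for $S\subseteq H_m$, $S\in(\alpha g)(m)$ iff $\{x\in H_n:x\circ g|_{\mathbf{A}_m}\in S\}\in\alpha(n)$ for any $n$ with $g(\mathbf{A}_m)\subseteq\mathbf{A}_n$. A subflow is a nonempty closed $G$-invariant subset of $S(G)$. For closed $Y\subseteq S(G)$, $\mathcal{F}^Y_m=\{T\subseteq H_m: T\in\alpha(m)\text{ for all }\alpha\in Y\}$. *)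

From mathcomp Require Import all_boot.
Set Implicit Arguments.
Unset Strict Implicit.
Unset Printing Implicit Defensive.

(* The structure K has
   universe nat (countably infinite); R l is the interpretation of l, a
   predicate on ar l-tuples (represented as functions 'I_(ar l) -> nat).
   The exhaustion is A_n = {0, ..., n-1} (|A_n| = n, increasing, union = K),
   with the induced substructure. *)

Section Fraisse.
Context (L : Type) (ar : L -> nat) (R : forall l : L, ('I_(ar l) -> nat) -> Prop).

Definition is_aut (g : nat -> nat) : Prop :=
  bijective g /\ forall l (x : 'I_(ar l) -> nat), R x <-> R (g \o x).

(* ultrahomogeneity: every isomorphism between finite substructures
   (given by enumerations a, b of the two finite sets) extends to an automorphism *)
Definition ultrahomogeneous : Prop :=
  forall (k : nat) (a b : 'I_k -> nat), injective a -> injective b ->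
    (forall l (x : 'I_(ar l) -> 'I_k), R (a \o x) <-> R (b \o x)) ->
    exists g, is_aut g /\ forall i, g (a i) = b i.

Definition is_emb (n : nat) (s : 'I_n -> nat) : Prop :=
  injective s /\
  forall l (x : 'I_(ar l) -> 'I_n), R (@nat_of_ord n \o x) <-> R (s \o x).

Definition H (n : nat) := {s : 'I_n -> nat | is_emb s}.

Definition is_embAA (m n : nat) (f : 'I_m -> 'I_n) : Prop :=
  injective f /\
  forall l (x : 'I_(ar l) -> 'I_m),
    R (@nat_of_ord m \o x) <-> R (@nat_of_ord n \o (f \o x)).

Definition EmbAA (m n : nat) := {f : 'I_m -> 'I_n | is_embAA f}.

Lemma emb_comp (m n : nat) (s : H n) (f : EmbAA m n) :
  is_emb (sval s \o sval f).
Proof.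
case: s => s [si sR]; case: f => f [fi fR]; split => /=.
  by move=> i j /si /fi.
move=> l x; exact: iff_trans (fR l x) (sR l (f \o x)).
Qed.

Definition compH (m n : nat) (s : H n) (f : EmbAA m n) : H m :=
  exist _ (sval s \o sval f) (emb_comp s f).

Definition embimg (m n : nat) (f : EmbAA m n) (T : H m -> Prop) : H n -> Prop :=
  fun s => T (compH s f).

Lemma incl_emb (m n : nat) (h : m <= n) : is_embAA (widen_ord h).
Proof.
split; first by move=> i j [] /val_inj.
by move=> l x.
Qed.

Definition incl (m n : nat) (h : m <= n) : EmbAA m n :=
  exist _ (widen_ord h) (incl_emb h).

Definition ultrafilter (X : Type) (F : (X -> Prop) -> Prop) : Prop :=
  [/\ F (fun _ => True),
      ~ F (fun _ => False),
      (forall A B, F A -> F B -> F (fun x => A x /\ B x)),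
      (forall A B : X -> Prop, (forall x, A x -> B x) -> F A -> F B) &
      (forall A, F A \/ F (fun x => ~ A x))].

Definition point := forall n : nat, (H n -> Prop) -> Prop.

(* S(G) = inverse limit of beta H_n along the continuous extensions of
   x |-> x o i^n_m; the extension maps an ultrafilter p on H_n to
   {S | {x | x o i^n_m in S} in p}. *)
Definition inSG (alpha : point) : Prop :=
  (forall n, ultrafilter (alpha n)) /\
  forall m n (h : m <= n) (S : H m -> Prop),
    alpha m S <-> alpha n (embimg (incl h) S).

Lemma restr_emb (g : nat -> nat) (m n : nat) (ga : is_aut g)
  (h : forall i : 'I_m, g i < n) : is_embAA (fun i => Ordinal (h i)).
Proof.
case: ga => [[g' gK _] gR]; split.
  move=> i j [] /(can_inj gK) /val_inj //.
by move=> l x; exact: (gR l (@nat_of_ord m \o x)).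
Qed.

Definition restr (g : nat -> nat) (m n : nat) (ga : is_aut g)
  (h : forall i : 'I_m, g i < n) : EmbAA m n :=
  exist _ (fun i => Ordinal (h i)) (restr_emb ga h).

(* beta = alpha g (right action): for S subset of H_m,
   S in beta(m) iff {x in H_n : x o g|_{A_m} in S} in alpha(n),
   for any n with g(A_m) contained in A_n. *)
Definition act_is (alpha : point) (g : nat -> nat) (ga : is_aut g)
  (beta : point) : Prop :=
  forall m n (h : forall i : 'I_m, g i < n) (S : H m -> Prop),
    beta m S <-> alpha n (embimg (restr ga h) S).

(* closedness in S(G) for the inverse-limit (= subspace of product) topology,
   each beta H_n carrying the Stone topology with basic open sets
   {p | T in p}: alpha is in the closure of Y iff every basic open
   neighbourhood {beta | T_i in beta(n_i), i < k} of alpha meets Y. *)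
Definition closedSG (Y : point -> Prop) : Prop :=
  forall alpha, inSG alpha ->
    (forall (k : nat) (ns : 'I_k -> nat) (Ts : forall i, H (ns i) -> Prop),
        (forall i, alpha (ns i) (Ts i)) ->
        exists beta, Y beta /\ forall i, beta (ns i) (Ts i)) ->
    Y alpha.

Definition subflow (Y : point -> Prop) : Prop :=
  [/\ (forall alpha, Y alpha -> inSG alpha),
      (exists alpha, Y alpha),
      closedSG Y &
      (forall alpha g (ga : is_aut g), Y alpha ->
          exists beta, Y beta /\ act_is alpha ga beta)].

Definition FY (Y : point -> Prop) (m : nat) (T : H m -> Prop) : Prop :=
  forall alpha, Y alpha -> alpha m T.

End Fraisse.

(* By ultrahomogeneity, f extends to an automorphism g of K with g|A_m = f.
   For any alpha in Y, the definition of the right action gives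
   T in (alpha g)(m) iff f(T) in alpha(n), and alpha g lies in Y because Y
   is G-invariant; so T in F^Y_m forces f(T) into alpha(n). *)

From Stdlib Require Import ProofIrrelevance FunctionalExtensionality.
From mathcomp Require Import all_boot.

Set Implicit Arguments.
Unset Strict Implicit.
Unset Printing Implicit Defensive.

Section EmbeddingImages.
Variables (L : Type) (ar : L -> nat) (R : forall l : L, ('I_(ar l) -> nat) -> Prop).

Lemma compH_ext (m n : nat) (s : H R n) (f f' : EmbAA R m n) :
  sval f =1 sval f' -> compH s f = compH s f'.
Proof.
move=> eq_ff'; apply: eq_sig_hprop => [? ? ?|/=]; first exact: proof_irrelevance.
by apply: functional_extensionality => i /=; rewrite eq_ff'.
Qed.

Lemma embimg_ext (m n : nat) (f f' : EmbAA R m n) (T : H R m -> Prop) :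
  sval f =1 sval f' -> embimg f T = embimg f' T.
Proof.
move=> eq_ff'; apply: functional_extensionality => s.
by rewrite /embimg (compH_ext s eq_ff').
Qed.

Lemma embAA_extends_to_aut (m n : nat) (f : EmbAA R m n) :
  ultrahomogeneous R -> exists2 g, is_aut R g & forall i : 'I_m, g i = sval f i.
Proof.
case: f => f [f_inj fR] /= HK.
have [g [ga gf]] := HK m (@nat_of_ord m) (fun i => nat_of_ord (f i)) val_inj
  (fun i j ij => f_inj i j (val_inj ij)) fR.
by exists g.
Qed.

Lemma act_is_embimg (alpha beta : point R) (g : nat -> nat) (ga : is_aut R g)
    (m n : nat) (f : EmbAA R m n) (T : H R m -> Prop) :
  act_is alpha ga beta -> (forall i : 'I_m, g i = sval f i) ->
  beta m T <-> alpha n (embimg f T).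
Proof.
move=> act gf.
have gAn : forall i : 'I_m, g i < n by move=> i; rewrite gf ltn_ord.
rewrite -(@embimg_ext _ _ (restr ga gAn)); first exact: act.
by move=> i; apply: val_inj; rewrite /= gf.
Qed.

End EmbeddingImages.

Theorem mainTheorem8 (L : Type) (ar : L -> nat)
  (R : forall l : L, ('I_(ar l) -> nat) -> Prop)
  (HK : ultrahomogeneous R)
  (Y : point R -> Prop) (HY : subflow Y)
  (m n : nat) (Hm : 0 < m) (T : H R m -> Prop) (f : EmbAA R m n) :
  FY Y T -> FY Y (embimg f T).
Proof.
move=> FT alpha Y_alpha.
have [_ _ _ Y_invariant] := HY.
have [g ga gf] := embAA_extends_to_aut f HK.
have [beta [Y_beta act]] := Y_invariant alpha g ga Y_alpha.
by apply/(act_is_embimg T act gf); apply: FT.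
Qed.
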